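(* Let $C=[\sigma,\alpha,\phi]$ be a $3$-constellation with $\alpha$ a fixed-point-free involution and $\sigma=\sigma_1\sigma_2\cdots\sigma_r$ its decomposition into disjoint cycles. Let $A=kQ/I$ be the surface algebra of $C$ over a field $k$, with vertex span $A_0=k^{Q_0}$, and let $\Lambda$ be its completion with respect to the arrow ideal. Then (1) $\mathcal{Z}(\Lambda)\cong A_0\cdot k[[z_1,z_2,\dots,z_r]]/(z_iz_j)_{i\neq j}$, and (2) $\mathcal{N}(\Lambda)\cong\prod_{i=1}^r\overline{k\tilde{\mathbb{A}}^{eq}_{|\sigma_i|}}$, where $\overline{k\tilde{\mathbb{A}}^{eq}_{n}}$ denotes the completion (with respect to the arrow ideal) of the path algebra of the cyclically oriented quiver $\tilde{\mathbb{A}}^{eq}_n$ with $n$ vertices $x_1,\dots,x_n$ and arrows $x_1\to x_2\to\cdots\to x_n\to x_1$.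
   Context: A $3$-constellation is a triple $[\sigma,\alpha,\phi]$ of permutations of $\{1,\dots,2m\}$ generating a transitive group with $\sigma\alpha\phi=\mathrm{id}$; with $\alpha$ a fixed-point-free involution it describes a cellularly embedded graph whose half-edges are $1,\dots,2m$, vertices are the cycles of $\sigma$, edges the $2$-cycles of $\alpha$, faces the cycles of $\phi$. The medial quiver $Q$ has a vertex for each edge and, for each half-edge $h$, an arrow $a_h$ from the vertex of the edge containing $h$ to that of the edge containing $\phi(h)$. The surface algebra is $A=kQ/I$ with $I$ generated by the paths $a_{\phi(h)}a_h$; its nonzero simple cycles correspond to the cycles $\sigma_i$ of $\sigma$, the cycle for $\sigma_i$ having length $|\sigma_i|$. $\mathcal{Z}(\Lambda)$ denotes the center. The normalization $\mathcal{N}(\Lambda)$ is defined as $\prod_i\Lambda_i$ where $\Lambda_i\subset\mathrm{Mat}_{|\sigma_i|}(k[[x_i]])$ is the hereditary order with entries in $k[[x_i]]$ on and below the diagonal and in $(x_i)$ above the diagonal. *)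

From HB Require Import structures.
From mathcomp Require Import all_boot all_order all_algebra all_fingroup.
Set Implicit Arguments.
Unset Strict Implicit.
Unset Printing Implicit Defensive.
Import GRing.Theory.
Local Open Scope ring_scope.

Section KAlg.
Variable k : fieldType.

Record kalg := KAlg {
  kcar :> Type;
  kadd : kcar -> kcar -> kcar;
  kmul : kcar -> kcar -> kcar;
  kone : kcar;
  kzero : kcar;
  kscale : k -> kcar -> kcar }.

Definition kalg_hom (A B : kalg) (f : A -> B) : Prop :=
  [/\ forall x y, f (kadd x y) = kadd (f x) (f y),
      forall x y, f (kmul x y) = kmul (f x) (f y),
      f (kone A) = kone B &
      forall c x, f (kscale c x) = kscale c (f x)].

Definition kalg_iso (A B : kalg) (f : A -> B) : Prop :=
  bijective f /\ kalg_hom f.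

Definition kalg_isomorphic (A B : kalg) : Prop := exists f : A -> B, kalg_iso f.

Definition central (A : kalg) (z : A) : Prop := forall y, kmul z y = kmul y z.

Definition prod_kalg (I : Type) (A : I -> kalg) : kalg :=
  @KAlg (forall i, A i)
    (fun x y i => kadd (x i) (y i))
    (fun x y i => kmul (x i) (y i))
    (fun i => kone (A i))
    (fun i => kzero (A i))
    (fun c x i => kscale c (x i)).

Definition supp (X : Type) (P : X -> bool) :=
  {f : X -> k | forall x, ~~ P x -> f x = 0}.

Definition trunc (X : Type) (P : X -> bool) (f : X -> k) : X -> k :=
  fun x => if P x then f x else 0.

Lemma trunc_ok (X : Type) (P : X -> bool) (f : X -> k) x :
  ~~ P x -> trunc P f x = 0.
Proof. by rewrite /trunc => /negbTE ->. Qed.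

Definition mkS (X : Type) (P : X -> bool) (f : X -> k) : supp P :=
  exist _ (trunc P f) (@trunc_ok X P f).

Definition supp_kalg (X : Type) (P : X -> bool)
    (mul : (X -> k) -> (X -> k) -> X -> k) (one : X -> k) : kalg :=
  @KAlg (supp P)
    (fun a b => mkS P (fun x => sval a x + sval b x))
    (fun a b => mkS P (mul (sval a) (sval b)))
    (mkS P one)
    (mkS P (fun _ => 0))
    (fun c a => mkS P (fun x => c * sval a x)).

(* Completion (w.r.t. the arrow ideal) of kQ/I for a finite quiver Q with
   I generated by paths of length 2 (monomial relations).  An element is a
   formal (possibly infinite) k-linear combination of the nonzero paths;
   a path (v, [:: a1; ...; an]) starts at v and traverses a1 first.
   Products of paths are written right-to-left: q * r = "r then q". *)
Section Quiver.
Variables (Q0 Q1 : finType) (src tgt : Q1 -> Q0).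
(* rel a b : the composite "a then b" (i.e. b a) lies in I *)
Variable rel : Q1 -> Q1 -> bool.

Definition qpath := (Q0 * seq Q1)%type.
Definition qstep (a b : Q1) : bool := (tgt a == src b) && ~~ rel a b.
Definition qvalid (p : qpath) : bool :=
  let: (v, s) := p in
  if s is a :: s' then (src a == v) && path qstep a s' else true.
Definition qend (v : Q0) (s : seq Q1) : Q0 := last v (map tgt s).
Definition qmul (f g : qpath -> k) (p : qpath) : k :=
  let: (v, s) := p in
  \sum_(j < (size s).+1) f (qend v (take j s), drop j s) * g (v, take j s).
Definition qone (p : qpath) : k := if p.2 is [::] then 1 else 0.

Definition completed_path_alg : kalg := supp_kalg qvalid qmul qone.
End Quiver.

Section Surface.
Variables (n : nat) (alpha phi : {perm 'I_n}).

Definition edges : {set {set 'I_n}} := [set [set h; alpha h] | h : 'I_n].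
Lemma edge_in (h : 'I_n) : [set h; alpha h] \in edges.
Proof. by apply/imsetP; exists h. Qed.
Definition sq0 := {e : {set 'I_n} | e \in edges}.
Definition edge_of (h : 'I_n) : sq0 := exist _ [set h; alpha h] (edge_in h).

(* arrow a_h : edge(h) -> edge(phi h); relations a_{phi h} a_h *)
Definition surface_completion : kalg :=
  @completed_path_alg sq0 'I_n
    (fun h => edge_of h) (fun h => edge_of (phi h)) (fun a b => b == phi a).
End Surface.

Section Series.
Variable r : nat.
Definition mono := {ffun 'I_r -> nat}.
Definition smul (f g : mono -> k) (mu : mono) : k :=
  \sum_(x : {ffun 'I_r -> 'I_(\sum_i mu i).+1} | [forall i, (x i <= mu i)%N])
     f [ffun i => nat_of_ord (x i)] * g [ffun i => (mu i - x i)%N].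
Definition sone (mu : mono) : k := if mu == [ffun => 0%N] then 1 else 0.
Definition series_alg : kalg := supp_kalg (fun _ : mono => true) smul sone.
Definition zvar (i : 'I_r) : series_alg :=
  mkS (fun _ : mono => true)
    (fun mu => if mu == [ffun j => nat_of_bool (j == i)] then 1 else 0).
Definition in_zz_ideal (x : series_alg) : Prop :=
  exists F : 'I_r -> 'I_r -> series_alg,
    x = \big[@kadd series_alg / kzero series_alg]_(i : 'I_r)
          \big[@kadd series_alg / kzero series_alg]_(j : 'I_r | i != j)
             kmul (F i j) (kmul (zvar i) (zvar j)).
End Series.

(* Hereditary order in Mat_n(k[[x]]): entry (i,j) coefficient of x^l;
   entries above the diagonal (i < j) lie in (x). *)
Section Order.
Variable n : nat.
Definition ho_valid (x : 'I_n * 'I_n * nat) : bool :=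
  let: (i, j, l) := x in (j <= i)%N || (0 < l)%N.
Definition ho_mul (f g : 'I_n * 'I_n * nat -> k) (x : 'I_n * 'I_n * nat) : k :=
  let: (i, j, l) := x in
  \sum_(t : 'I_n) \sum_(a < l.+1) f (i, t, nat_of_ord a) * g (t, j, (l - a)%N).
Definition ho_one (x : 'I_n * 'I_n * nat) : k :=
  let: (i, j, l) := x in if (i == j) && (l == 0%N) then 1 else 0.
Definition hered_order : kalg := supp_kalg ho_valid ho_mul ho_one.

Definition cyc_alg : kalg :=
  @completed_path_alg 'I_n 'I_n id (@ordS n) (fun _ _ => false).
End Order.

(* cycles of sigma (including fixed points), enumerated *)
Definition ncyc (m : nat) (sigma : {perm 'I_m}) : nat := #|porbits sigma|.
Definition cyc_len (m : nat) (sigma : {perm 'I_m}) (i : 'I_(ncyc sigma)) : nat :=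
  #|enum_val (A := porbits sigma) i|.

Definition normalization (m : nat) (sigma : {perm 'I_m}) : kalg :=
  prod_kalg (fun i : 'I_(ncyc sigma) => hered_order (cyc_len i)).

End KAlg.

From HB Require Import structures.
From mathcomp Require Import all_boot all_order all_algebra all_fingroup.
From mathcomp Require Import zify.
From Stdlib Require Import FunctionalExtensionality ProofIrrelevance.
Set Implicit Arguments.
Unset Strict Implicit.
Unset Printing Implicit Defensive.
Import GRing.Theory.
Local Open Scope ring_scope.

(* A nonzero path of the surface algebra is determined by its first arrow
   [a_h] and its length: since [a_b a_a <> 0] exactly when [b = alpha (phi a)
   = sigma^-1 a], it runs along [h, sigma^-1 h, sigma^-2 h, ...].  Commuting
   with the arrows forces a central element to live on the closed walks whose
   length is a multiple of the length of the cycle [sigma_i] they wind around,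
   with a coefficient depending only on [i] and the number of turns; on the
   trivial paths the coefficient is constant by transitivity.  Sending [z_i^c]
   to the sum of the closed walks winding [c] times around [sigma_i] is then a
   homomorphism onto the center, and it kills exactly the series without pure
   powers [z_i^c], i.e. the ideal [(z_i z_j)_(i <> j)].  In the same way a
   path of the cyclic quiver is determined by its source [x_j] and its length,
   and the path winding [l] times from [x_j] to [x_i] corresponds to the entry
   [x^l] at position [(i, j)] of the hereditary order. *)

Section SuppAlgebra.
Variables (k : fieldType) (X : Type) (P : X -> bool).

Lemma supp_ext (a b : supp k P) : (forall x, sval a x = sval b x) -> a = b.
Proof.
case: a b => [f Hf] [g Hg] /= /functional_extensionality efg; subst g.
by rewrite (proof_irrelevance _ Hf Hg).
Qed.

Lemma supp_out (a : supp k P) x : ~~ P x -> sval a x = 0.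
Proof. exact: (proj2_sig a). Qed.

Lemma sval_mkS (f : X -> k) x : sval (mkS P f) x = if P x then f x else 0.
Proof. by []. Qed.

Variables (mul : (X -> k) -> (X -> k) -> X -> k) (one : X -> k).
Let A := supp_kalg P mul one.

Lemma supp_addE (a b : A) x : sval (kadd a b) x = if P x then sval a x + sval b x else 0.
Proof. by []. Qed.

Lemma supp_mulE (a b : A) x :
  sval (kmul a b) x = if P x then mul (sval a) (sval b) x else 0.
Proof. by []. Qed.

Lemma supp_oneE x : sval (kone A) x = if P x then one x else 0.
Proof. by []. Qed.

Lemma supp_zeroE x : sval (kzero A) x = 0.
Proof. by rewrite /= /trunc; case: (P x). Qed.

Lemma supp_scaleE c (a : A) x : sval (kscale c a) x = if P x then c * sval a x else 0.
Proof. by []. Qed.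

End SuppAlgebra.

Lemma sum_inj_support (R : nmodType) (I J : finType) (h : J -> I) (G : I -> R) :
  injective h -> (forall i, i \notin codom h -> G i = 0) ->
  \sum_i G i = \sum_j G (h j).
Proof.
move=> h_inj G0; rewrite (bigID (mem (codom h))) /= [X in _ + X]big1 ?addr0 //.
rewrite -(big_imset G (in2W h_inj)) /=; apply: eq_bigl => i.
by apply/codomP/imsetP => [[j ->]|[j _ ->]]; exists j.
Qed.

Section KalgIso.
Variable k : fieldType.

Lemma kalg_hom_can (A B : kalg k) (f : A -> B) (g : B -> A) :
  cancel f g -> cancel g f -> kalg_hom f -> kalg_hom g.
Proof.
move=> fK gK [fD fM f1 fZ]; split.
- by move=> x y; apply: (can_inj fK); rewrite gK fD !gK.
- by move=> x y; apply: (can_inj fK); rewrite gK fM !gK.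
- by rewrite -f1 fK.
- by move=> c x; apply: (can_inj fK); rewrite gK fZ !gK.
Qed.

Lemma prod_kalg_iso (I : Type) (A B : I -> kalg k)
    (f : forall i, A i -> B i) (g : forall i, B i -> A i) :
  (forall i, cancel (f i) (g i)) -> (forall i, cancel (g i) (f i)) ->
  (forall i, kalg_hom (f i)) ->
  @kalg_iso _ (prod_kalg A) (prod_kalg B) (fun x i => f i (x i)).
Proof.
move=> fK gK f_hom; split.
  by exists (fun (y : prod_kalg B) i => g i (y i)) => x;
    apply: functional_extensionality_dep => i; rewrite ?fK ?gK.
split=> [x y|x y||c x]; apply: functional_extensionality_dep => i /=;
  by case: (f_hom i).
Qed.

End KalgIso.

Lemma map_traject (T : Type) (f : T -> T) x L :
  map f (traject f x L) = traject f (f x) L.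
Proof. by elim: L x => //= L IH x; rewrite IH. Qed.

Lemma drop_traject (T : Type) (f : T -> T) x L q : (q <= L)%N ->
  drop q (traject f x L) = traject f (iter q f x) (L - q).
Proof.
move=> qL; rewrite -{1}(subnKC qL) trajectD drop_size_cat //.
by rewrite size_traject.
Qed.

Section TrajectQuiver.
Variables (k : fieldType) (Q0 Q1 : finType) (src tgt : Q1 -> Q0).
Variables (rel : Q1 -> Q1 -> bool) (next : Q1 -> Q1).
Hypothesis qstepE : forall a b, qstep src tgt rel a b = (b == next a).

Definition tpath a L : qpath Q0 Q1 := (src a, traject next a L).

Lemma tgt_next a : tgt a = src (next a).
Proof. by have := qstepE a (next a); rewrite eqxx => /andP[/eqP]. Qed.

Lemma qvalid_tpath a L : qvalid src tgt rel (tpath a L).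
Proof.
case: L => //= L; rewrite eqxx /=.
have -> : path (qstep src tgt rel) a (traject next (next a) L) =
          fpath next a (traject next (next a) L).
  by apply: eq_path => x y; rewrite qstepE eq_sym.
exact: fpath_traject.
Qed.

Lemma qvalid_tpathP p : (forall v, exists a, v = src a) ->
  qvalid src tgt rel p -> exists a L, p = tpath a L.
Proof.
move=> src_onto; case: p => v [|a s] /=.
  by have [a ->] := src_onto v; exists a, 0%N.
move=> /andP[/eqP <- s_path]; exists a, (size s).+1.
rewrite /tpath trajectS -fpathE //.
by move: s_path; apply: sub_path => x y; rewrite qstepE eq_sym.
Qed.

Lemma qmul_tpath (f f' : qpath Q0 Q1 -> k) a L :
  qmul tgt f f' (tpath a L) =
  \sum_(q < L.+1) f (tpath (iter q next a) (L - q)) * f' (tpath a q).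
Proof.
rewrite /qmul /tpath size_traject; apply: eq_bigr => q _.
have qL : (q <= L)%N by rewrite -ltnS.
rewrite take_traject // drop_traject // /qend (eq_map tgt_next) map_comp.
by rewrite map_traject last_map last_traject.
Qed.

Lemma qone_tpath a L : qone k (tpath a L) = if L == 0 then 1 else 0.
Proof. by case: L. Qed.

End TrajectQuiver.

Section CyclicQuiver.
Variables (k : fieldType) (n : nat).
Local Open Scope nat_scope.

Local Arguments ho_valid : simpl never.

Notation cpath := (tpath id (@ordS n)).
Notation cvalid := (qvalid id (@ordS n) (fun _ _ => false)).

Lemma cyc_qstepE a b : qstep id (@ordS n) (fun _ _ => false) a b = (b == ordS a).
Proof. by rewrite /qstep andbT eq_sym. Qed.

Lemma val_iter_ordS (v : 'I_n) L : iter L (@ordS n) v = (v + L) %% n :> nat.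
Proof.
elim: L => [|L IH] /=; first by rewrite addn0 modn_small.
by rewrite IH /= -addn1 modnDml addn1 addnS.
Qed.

Lemma ho_validE (i j : 'I_n) l : ho_valid (i, j, l) = (j <= l * n + i).
Proof.
have := ltn_ord j; case: l => [|l] jn; rewrite /ho_valid; first by rewrite orbF.
by rewrite orbT mulSn; symmetry; lia.
Qed.

Lemma divmod_ord (i : 'I_n) l : (l * n + i) %/ n = l /\ (l * n + i) %% n = i.
Proof.
have n_gt0 : 0 < n by apply: leq_ltn_trans (ltn_ord i).
by rewrite divnMDl // divn_small // addn0 modnMDl modn_small.
Qed.

(* The entry [x^l] at position [(i, j)] of the hereditary order is the path
   from [x_j] to [x_i] of length [ho_len i j l]. *)
Definition ho_len (i j : 'I_n) l := l * n + i - j.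

Lemma iter_ho_len (i j : 'I_n) l : ho_valid (i, j, l) ->
  iter (ho_len i j l) (@ordS n) j = i /\ (j + ho_len i j l) %/ n = l.
Proof.
rewrite ho_validE /ho_len => jP; rewrite subnKC //.
have [El Ei] := divmod_ord i l; split=> //.
by apply: val_inj; rewrite /= val_iter_ordS subnKC.
Qed.

Lemma ho_len_iter (j : 'I_n) L (i := iter L (@ordS n) j) (l := (j + L) %/ n) :
  ho_valid (i, j, l) /\ ho_len i j l = L.
Proof.
by rewrite ho_validE /ho_len /i /l val_iter_ordS -divn_eq leq_addr addKn.
Qed.

Definition ho_of_cyc (f : cyc_alg k n) : hered_order k n :=
  mkS (@ho_valid n) (fun x => let: (i, j, l) := x in sval f (cpath j (ho_len i j l))).

Definition cyc_of_ho (h : hered_order k n) : cyc_alg k n :=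
  mkS cvalid (fun p => let: (v, s) := p in
    sval h (iter (size s) (@ordS n) v, v, (v + size s) %/ n)).

Lemma ho_of_cycK : cancel ho_of_cyc cyc_of_ho.
Proof.
move=> f; apply: supp_ext => p; rewrite sval_mkS.
case pP: (cvalid p); last by rewrite (supp_out f) ?pP.
have [v [L ->]] := qvalid_tpathP cyc_qstepE (fun v => ex_intro _ v erefl) pP.
rewrite /= size_traject /trunc.
by have [-> ->] := ho_len_iter v L.
Qed.

Lemma cyc_of_hoK : cancel cyc_of_ho ho_of_cyc.
Proof.
move=> h; apply: supp_ext => -[[i j] l]; rewrite sval_mkS.
case hP: (ho_valid _); last by rewrite (supp_out h) ?hP.
rewrite sval_mkS qvalid_tpath /= ?size_traject; last exact: cyc_qstepE.
by have [-> ->] := iter_ho_len hP.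
Qed.

Lemma ho_len_split (i j : 'I_n) l q : ho_valid (i, j, l) -> q <= ho_len i j l ->
  let t := iter q (@ordS n) j in let b := (j + q) %/ n in
  [/\ b <= l, ho_valid (i, t, l - b) & ho_len i t (l - b) = ho_len i j l - q].
Proof.
move=> hP qL t b; have [_ El] := iter_ho_len hP.
have bl : b <= l by rewrite -[l]El leq_div2r // leq_add2l.
have Ejq : j + q = b * n + t by rewrite /t val_iter_ordS -divn_eq.
have bln : b * n <= l * n by rewrite leq_mul2r bl orbT.
move: hP qL; rewrite !ho_validE /ho_len mulnBl => jP qL.
split=> //; lia.
Qed.

Lemma cyc_mul_reindex (i j : 'I_n) l (f g : qpath 'I_n 'I_n -> k) :
  ho_valid (i, j, l) ->
  (\sum_(q < (ho_len i j l).+1)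
      f (cpath (iter q (@ordS n) j) (ho_len i j l - q)) * g (cpath j q) =
   \sum_(t : 'I_n) \sum_(a < l.+1)
      (if ho_valid (i, t, nat_of_ord a) then f (cpath t (ho_len i t a)) else 0) *
      (if ho_valid (t, j, (l - a)%N) then g (cpath j (ho_len t j (l - a))) else 0))%R.
Proof.
move=> hP; rewrite pair_bigA; symmetry.
pose h q := (iter q (@ordS n) j, inord (l - (j + q) %/ n) : 'I_l.+1).
rewrite (sum_inj_support (h := fun q : 'I_(ho_len i j l).+1 => h q)).
- apply: eq_bigr => q _; have [bl vP E] := ho_len_split hP (ltn_ord q).
  have [vP' Eq] := ho_len_iter j q.
  by rewrite /h /= inordK ?ltnS ?leq_subr // vP E subKn // vP' Eq.
- move=> q1 q2 [E1 E2]; have E1' := congr1 val E1; rewrite /= !val_iter_ordS in E1'.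
  have [b1l _ _] := ho_len_split hP (ltn_ord q1).
  have [b2l _ _] := ho_len_split hP (ltn_ord q2).
  have := congr1 (@nat_of_ord _) E2; rewrite !inordK ?ltnS ?leq_subr //.
  move=> /(congr1 (subn l)); rewrite !subKn // => Eb.
  apply: val_inj; apply/eqP; rewrite -(eqn_add2l j).
  by rewrite (divn_eq (j + q1) n) (divn_eq (j + q2) n) Eb E1'.
- case=> t a noP.
  case tP: (ho_valid (i, t, nat_of_ord a)); last by rewrite mul0r.
  case jP: (ho_valid (t, j, (l - a)%N)); last by rewrite mulr0.
  have al : a <= l by rewrite -ltnS.
  have qL : ho_len t j (l - a) < (ho_len i j l).+1.
    move: tP jP hP; rewrite !ho_validE /ho_len ltnS mulnBl.
    have : a * n <= l * n by rewrite leq_mul2r al orbT.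
    lia.
  case/negP: noP; apply/codomP; exists (Ordinal qL).
  have [It Il] := iter_ho_len jP; rewrite /h /= It Il subKn //.
  by congr (_, _); apply: val_inj; rewrite /= inordK.
Qed.

Lemma sval_ho_of_cyc f i j l : sval (ho_of_cyc f) (i, j, l) =
  if ho_valid (i, j, l) then sval f (cpath j (ho_len i j l)) else 0%R.
Proof. by []. Qed.

Lemma ho_of_cyc_hom : kalg_hom ho_of_cyc.
Proof.
have cP := qvalid_tpath cyc_qstepE.
split=> [a b|a b||c a]; apply: supp_ext => -[[i j] l]; rewrite sval_ho_of_cyc.
- by rewrite (supp_addE a) supp_addE cP !sval_ho_of_cyc; case: ifP.
- rewrite (supp_mulE a) supp_mulE cP; case: ifP => // hP.
  by rewrite (qmul_tpath cyc_qstepE) cyc_mul_reindex.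
- rewrite !supp_oneE cP; case: ifP => // hP.
  rewrite qone_tpath /ho_one; congr (if _ then _ else _).
  move: hP; rewrite ho_validE /ho_len.
  have := ltn_ord i; have := ltn_ord j; rewrite -val_eqE.
  by case: l => [|l]; rewrite ?mul0n ?add0n ?mulSn /=; lia.
- by rewrite (supp_scaleE c a) supp_scaleE cP !sval_ho_of_cyc; case: ifP.
Qed.

Lemma cyc_of_ho_iso : kalg_iso cyc_of_ho.
Proof.
split; first by exists ho_of_cyc; [exact: cyc_of_hoK | exact: ho_of_cycK].
exact: kalg_hom_can ho_of_cycK cyc_of_hoK ho_of_cyc_hom.
Qed.

End CyclicQuiver.

Lemma prod_hered_order_isomorphic (k : fieldType) (I : Type) (len : I -> nat) :
  kalg_isomorphic (prod_kalg (fun i => hered_order k (len i)))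
                  (prod_kalg (fun i => cyc_alg k (len i))).
Proof.
exists (fun x i => cyc_of_ho (x i)).
apply: (prod_kalg_iso (f := fun i => @cyc_of_ho k (len i))
                      (g := fun i => @ho_of_cyc k (len i))) => i.
- exact: cyc_of_hoK.
- exact: ho_of_cycK.
- by case: (cyc_of_ho_iso k (len i)).
Qed.

Section PowerSeries.
Variables (k : fieldType) (r : nat).
Local Open Scope nat_scope.

Definition mono_pow (i : 'I_r) c : mono r := [ffun j => if j == i then c else 0].

Definition mono_pair (i j : 'I_r) : mono r := [ffun t => (t == i) + (t == j)].

Lemma mono_pow0 i : mono_pow i 0 = [ffun => 0].
Proof. by apply/ffunP => j; rewrite !ffunE; case: (j == i). Qed.

Lemma smul_mono_pow (f g : mono r -> k) i c :
  smul f g (mono_pow i c) = (\sum_(a < c.+1) f (mono_pow i a) * g (mono_pow i (c - a)))%R.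
Proof.
rewrite /smul big_mkcond /=.
set S := \sum_j mono_pow i c j.
have ES : S = c.
  rewrite /S (bigD1 i) //= big1 ?ffunE ?eqxx ?addn0 // => j /negbTE.
  by rewrite ffunE => ->.
have aS (a : 'I_c.+1) : a < S.+1 by rewrite ES.
pose h (a : 'I_c.+1) := [ffun j => if j == i then (inord a : 'I_S.+1) else ord0].
rewrite (sum_inj_support (h := h)).
- apply: eq_bigr => a _; rewrite ifT; last first.
    apply/forallP => j; rewrite /h !ffunE; case: eqP => _ //=.
    by rewrite inordK // -ltnS.
  congr (f _ * g _)%R; apply/ffunP => j; rewrite !ffunE;
    by case: eqP => //= _; rewrite inordK.
- move=> a1 a2 /(congr1 (fun X : {ffun 'I_r -> 'I_S.+1} => nat_of_ord (X i))).
  by rewrite !ffunE eqxx !inordK // => /val_inj.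
- move=> X hX; case: ifP => // /forallP X_le; case/negP: hX; apply/codomP.
  have Xi : X i < c.+1 by have := X_le i; rewrite ffunE eqxx.
  exists (Ordinal Xi); apply/ffunP => j; rewrite ffunE.
  case: eqP => [->|/eqP ne]; apply: val_inj => /=; first by rewrite inordK.
  by have := X_le j; rewrite ffunE (negbTE ne) leqn0 => /eqP.
Qed.

Lemma eq_smul_r (f g g' : mono r -> k) : g =1 g' -> smul f g =1 smul f g'.
Proof. by move=> eq_g mu; apply: eq_bigr => X _; rewrite eq_g. Qed.

Lemma smul_indicator (f : mono r -> k) (nu mu : mono r) :
  smul f (fun m => if m == nu then 1%R else 0%R) mu =
  if [forall t, nu t <= mu t] then f [ffun t => mu t - nu t] else 0%R.
Proof.
rewrite /smul big_mkcond /=.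
set S := \sum_j mu j.
have mS t : mu t - nu t < S.+1.
  by rewrite ltnS (leq_trans (leq_subr _ _)) // /S (bigD1 t) //= leq_addr.
case: ifP => [/forallP nu_le|nu_le].
- pose X0 := [ffun t => (inord (mu t - nu t) : 'I_S.+1)].
  rewrite (bigD1 X0) //= big1 ?addr0.
  + rewrite ifT; last by apply/forallP => t; rewrite ffunE inordK // leq_subr.
    rewrite ifT ?mulr1; last by apply/eqP/ffunP => t; rewrite !ffunE inordK // subKn.
    by congr f; apply/ffunP => t; rewrite !ffunE inordK.
  + move=> X X0X; case: ifP => // /forallP X_le.
    case: ifP => [/eqP E|]; last by rewrite mulr0.
    case/negP: X0X; apply/eqP/ffunP => t; rewrite ffunE.
    apply: val_inj; rewrite /= inordK //.
    have := congr1 (fun m : mono r => m t) E; rewrite ffunE => <-.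
    by rewrite subKn // X_le.
- apply: big1 => X _; case: ifP => // /forallP X_le.
  case: ifP => [/eqP E|]; last by rewrite mulr0.
  case/negP: nu_le; apply/forallP => t.
  by rewrite -E ffunE leq_subr.
Qed.

Lemma zvar_mulE (i j : 'I_r) mu :
  sval (kmul (zvar k i) (zvar k j)) mu = if mu == mono_pair i j then 1%R else 0%R.
Proof.
rewrite supp_mulE /=.
rewrite (smul_indicator (fun m => if m == [ffun t => nat_of_bool (t == i)] then 1 else 0)%R).
case: ifP => [/forallP j_le|j_le].
- congr (if _ then _ else _); apply/eqP/eqP => E.
    apply/ffunP => t; have := congr1 (fun m : mono r => m t) E; rewrite !ffunE => <-.
    by rewrite subnK //; have := j_le t; rewrite ffunE.
  by apply/ffunP => t; rewrite !ffunE E !ffunE addnK.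
- case: eqP => // E; case/negP: j_le; apply/forallP => t.
  by rewrite E !ffunE leq_addl.
Qed.

Lemma sval_sum (I : finType) (P : pred I) (F : I -> series_alg k r) mu :
  sval (\big[@kadd _ (series_alg k r)/kzero (series_alg k r)]_(i | P i) F i) mu =
  (\sum_(i | P i) sval (F i) mu)%R.
Proof.
elim/big_rec2: _ => [|i y1 y2 _ <-]; first exact: supp_zeroE.
by rewrite supp_addE.
Qed.

Lemma mono_pair_le_pow a b i c :
  a != b -> [forall t, mono_pair a b t <= mono_pow i c t] = false.
Proof.
move=> ab; apply/negbTE/forallP => pair_le; have := pair_le a; have := pair_le b.
rewrite !ffunE !eqxx (eq_sym b a) (negbTE ab) /=.
case: (a =P i) => [ai|]; case: (b =P i) => [bi|] //.
by move: ab; rewrite ai bi eqxx.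
Qed.

Lemma in_zz_ideal_pow (x : series_alg k r) :
  in_zz_ideal x -> forall i c, sval x (mono_pow i c) = 0%R.
Proof.
move=> [F ->] i c; rewrite sval_sum big1 // => a _; rewrite sval_sum big1 // => b ab.
by rewrite supp_mulE /= (eq_smul_r _ (zvar_mulE a b)) smul_indicator mono_pair_le_pow.
Qed.

Definition mixed_pair (mu : mono r) :=
  [pick ij : 'I_r * 'I_r | [&& ij.1 != ij.2, 0 < mu ij.1 & 0 < mu ij.2]].

Lemma mixed_pair_le mu a b :
  mixed_pair mu = Some (a, b) -> (a != b) && [forall t, mono_pair a b t <= mu t].
Proof.
rewrite /mixed_pair; case: pickP => // -[a' b'] /= /and3P[ne pa pb] [<- <-].
rewrite ne; apply/forallP => t; rewrite !ffunE.
case: (eqVneq t a') => [->|ta]; first by rewrite (negbTE ne).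
by case: (eqVneq t b') => [->|].
Qed.

Lemma mixed_pair_None (i0 : 'I_r) mu :
  mixed_pair mu = None -> exists i, mu = mono_pow i (mu i).
Proof.
rewrite /mixed_pair; case: pickP => // no_pair _.
case: (pickP (fun t => 0 < mu t)) => [i mu_i|mu0].
  exists i; apply/ffunP => j; rewrite ffunE; case: eqP => [-> //|/eqP ji].
  by have := no_pair (i, j); rewrite /= eq_sym ji mu_i /= lt0n => /negbFE/eqP.
have mu_0 t : mu t = 0 by have := mu0 t; rewrite /= lt0n => /negbFE/eqP.
by exists i0; apply/ffunP => j; rewrite ffunE !mu_0; case: (j == i0).
Qed.

(* Each monomial with two distinct variables is charged to the pair chosen by
   [mixed_pair]. *)
Lemma pow_vanishing_in_zz_ideal (i0 : 'I_r) (x : series_alg k r) :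
  (forall i c, sval x (mono_pow i c) = 0%R) -> in_zz_ideal x.
Proof.
move=> x_pow.
pose shift (nu : mono r) a b := [ffun t => nu t + mono_pair a b t].
pose F a b : series_alg k r := mkS (fun _ : mono r => true) (fun nu =>
  if mixed_pair (shift nu a b) == Some (a, b) then sval x (shift nu a b) else 0%R).
have coef_F mu a b : a != b ->
    sval (kmul (F a b) (kmul (zvar k a) (zvar k b))) mu =
    (if mixed_pair mu == Some (a, b) then sval x mu else 0)%R.
  move=> ab; rewrite supp_mulE /= (eq_smul_r _ (zvar_mulE a b)) smul_indicator.
  case: ifP => [/forallP le_mu|le_mu]; last first.
    by case: eqP => // /mixed_pair_le; rewrite le_mu andbF.
  rewrite /trunc /=; have -> // : shift [ffun t => mu t - mono_pair a b t] a b = mu.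
  by apply/ffunP => t; rewrite !ffunE subnK //; have := le_mu t; rewrite ffunE.
exists F; apply: supp_ext => mu; rewrite sval_sum.
under eq_bigr => a _ do rewrite sval_sum (eq_bigr _ (coef_F mu a)).
case Emu: (mixed_pair mu) => [[a0 b0]|]; last first.
  rewrite big1 => [|a _]; last by apply: big1 => b _.
  by have [i ->] := mixed_pair_None i0 Emu; rewrite x_pow.
have /andP[ne _] := mixed_pair_le Emu.
rewrite (bigD1 a0) //= (bigD1 b0) //= eqxx big1 ?addr0; last first.
  move=> b /andP[_ nb]; case: (Some (a0, b0) =P Some (a0, b)) => // -[E].
  by move: nb; rewrite E eqxx.
rewrite big1 ?addr0 // => a na; apply: big1 => b _.
by case: (Some (a0, b0) =P Some (a, b)) => // -[Ea _]; move: na; rewrite Ea eqxx.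
Qed.

(* [i0] only witnesses [0 < r]; for [r = 0] the constant monomial is no
   [mono_pow]. *)
Lemma in_zz_ideal_iff (i0 : 'I_r) (x : series_alg k r) :
  in_zz_ideal x <-> forall i c, sval x (mono_pow i c) = 0%R.
Proof. by split; [exact: in_zz_ideal_pow | exact: pow_vanishing_in_zz_ideal]. Qed.

End PowerSeries.

Lemma gen_transitive_invariant (T : finType) (S : {set {perm T}}) (U : eqType)
    (f : T -> U) :
  [transitive <<S>>, on [set: T] | 'P] ->
  (forall s x, s \in S -> f (s x) = f x) -> forall x y, f x = f y.
Proof.
move=> S_trans fS.
pose H := [set a : {perm T} | [forall x, f (a x) == f x]].
have H_group : group_set H.
  apply/group_setP; split; first by rewrite inE; apply/forallP => x; rewrite perm1.
  move=> a b; rewrite !inE => /forallP fa /forallP fb; apply/forallP => x.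
  by rewrite permM (eqP (fb _)) (eqP (fa _)).
have SH : (<<S>> \subset Group H_group)%g.
  by rewrite gen_subG; apply/subsetP => s sS; rewrite inE; apply/forallP => x; rewrite fS.
move=> x y; have [a /(subsetP SH)] := atransP2 S_trans (in_setT x) (in_setT y).
by rewrite inE => /forallP fa ->; rewrite (eqP (fa x)).
Qed.

Lemma iter_porbit_dvd (T : finType) (s : {perm T}) x K :
  (iter K s x == x) = (#|porbit s x| %| K)%N.
Proof.
set p := #|porbit s x|; have p_gt0 : (0 < p)%N by rewrite lt0n card_porbit_neq0.
have iter_mod : iter K s x = iter (K %% p) s x.
  rewrite {1}(divn_eq K p) addnC iterD; congr iter.
  by elim: (K %/ p)%N => //= c IH; rewrite mulSn iterD IH iter_porbit.
rewrite iter_mod /dvdn; have : (K %% p < p)%N by rewrite ltn_mod.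
case: (K %% p)%N => [|c] c_lt; first by rewrite !eqxx.
apply/negbTE/eqP => iter_c.
have := nth_uniq x _ _ (uniq_traject_porbit s x); rewrite size_traject.
by move=> /(_ c.+1 0 c_lt p_gt0); rewrite !nth_traject // iter_c eqxx.
Qed.

Section Surface.
Variables (k : fieldType) (n : nat) (sigma alpha phi : {perm 'I_n}).
Hypothesis Hcomp : forall h, sigma (alpha (phi h)) = h.
Hypothesis Hinv : forall h, alpha (alpha h) = h.
Hypothesis Hfpf : forall h, alpha h != h.

Notation E := (@edge_of n alpha).
Notation srel := (fun a b : 'I_n => b == phi a).
Notation svalid := (qvalid (fun h => E h) (fun h => E (phi h)) srel).
Notation SA := (surface_completion k alpha phi).
Notation r := (ncyc sigma).
Notation olen g := #|porbit sigma g|.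

Lemma alpha_phi h : alpha (phi h) = (sigma^-1)%g h.
Proof. by rewrite -[in RHS](Hcomp h) permK. Qed.

Lemma edge_alpha h : E (alpha h) = E h.
Proof. by apply: val_inj => /=; rewrite Hinv setUC. Qed.

Lemma surface_qstepE a b :
  qstep (fun h => E h) (fun h => E (phi h)) srel a b = (b == (sigma^-1)%g a).
Proof.
rewrite /qstep -alpha_phi; apply/idP/eqP => [/andP[/eqP Eab /negP ab]|->].
  have : b \in val (E (phi a)) by rewrite Eab /= set21.
  by rewrite /= !inE => /orP[/eqP bE|/eqP //]; rewrite bE eqxx in ab.
by rewrite edge_alpha eqxx /= Hfpf.
Qed.

Definition walk g L : qpath (sq0 alpha) 'I_n := tpath (fun h => E h) (sigma^-1)%g g L.

Lemma edge_onto (v : sq0 alpha) : exists h, v = E h.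
Proof. by case: v => e /[dup] /imsetP[h _ ->] eP; exists h; apply: val_inj. Qed.

Lemma svalid_walkP p : svalid p -> exists g L, p = walk g L.
Proof. exact: (qvalid_tpathP surface_qstepE edge_onto). Qed.

Lemma svalid_walk g L : svalid (walk g L).
Proof.
exact: (@qvalid_tpath _ _ _ (fun h => E (phi h)) srel _ surface_qstepE g L).
Qed.

Lemma walk_ext (u v : SA) : (forall g L, sval u (walk g L) = sval v (walk g L)) -> u = v.
Proof.
move=> uv; apply: supp_ext => p; case pP: (svalid p); last by rewrite !supp_out ?pP.
by have [g [L ->]] := svalid_walkP pP.
Qed.

Lemma qmul_walk (f f' : qpath (sq0 alpha) 'I_n -> k) g L :
  qmul (fun h => E (phi h)) f f' (walk g L) =
  \sum_(q < L.+1) f (walk (iter q (sigma^-1)%g g) (L - q)) * f' (walk g q).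
Proof. exact: (@qmul_tpath _ _ _ _ (fun h => E (phi h)) srel _ surface_qstepE). Qed.

Lemma porbit_iter_invp q g : porbit sigma (iter q (sigma^-1)%g g) = porbit sigma g.
Proof.
elim: q => //= q <-.
by have := porbit_perm sigma^-1 1 (iter q (sigma^-1)%g g); rewrite expg1 !porbitV.
Qed.

Lemma iter_invp_fix K g : (iter K (sigma^-1)%g g == g) = (olen g %| K)%N.
Proof. by rewrite iter_porbit_dvd porbitV. Qed.

Lemma porbit_in g : porbit sigma g \in porbits sigma.
Proof. exact: imset_f. Qed.

Definition cyc_index g : 'I_r := enum_rank_in (porbit_in g) (porbit sigma g).

Lemma cyc_indexK g : enum_val (cyc_index g) = porbit sigma g.
Proof. exact: (enum_rankK_in (porbit_in g) (porbit_in g)). Qed.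

Lemma cyc_index_iter_invp q g : cyc_index (iter q (sigma^-1)%g g) = cyc_index g.
Proof. by apply: enum_val_inj; rewrite !cyc_indexK porbit_iter_invp. Qed.

Lemma cyc_index_onto i : exists g, cyc_index g == i.
Proof.
have /imsetP[g _ Eg] := enum_valP i; exists g.
by apply/eqP/enum_val_inj; rewrite cyc_indexK.
Qed.

Definition cyc_rep i := xchoose (cyc_index_onto i).

Lemma cyc_repK i : cyc_index (cyc_rep i) = i.
Proof. exact/eqP/(xchooseP (cyc_index_onto i)). Qed.

Lemma olen_gt0 g : (0 < olen g)%N.
Proof. by rewrite lt0n card_porbit_neq0. Qed.

(* The coefficient of [z_i^c] sits on the closed walks around the cycle
   [sigma_i] of length [c * |sigma_i|]. *)
Definition walk_coef (f : mono r -> k) g L :=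
  if (olen g %| L)%N then f (mono_pow (cyc_index g) (L %/ olen g)) else 0.

Definition psi_fun (f : mono r -> k) (p : qpath (sq0 alpha) 'I_n) :=
  if p.2 is g :: _ then walk_coef f g (size p.2) else f [ffun => 0%N].

Definition psi (x : series_alg k r) : SA := mkS svalid (psi_fun (sval x)).

Lemma sval_psi x g L : sval (psi x) (walk g L) = walk_coef (sval x) g L.
Proof.
rewrite sval_mkS svalid_walk; case: L => [|L] /=.
  by rewrite /walk_coef dvdn0 div0n mono_pow0.
by rewrite /psi_fun /= size_traject.
Qed.

Lemma walk_coef_iter f g L q : walk_coef f (iter q (sigma^-1)%g g) L = walk_coef f g L.
Proof. by rewrite /walk_coef porbit_iter_invp cyc_index_iter_invp. Qed.

Lemma walk_coef_mul (f1 f2 : mono r -> k) g L :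
  walk_coef (smul f1 f2) g L = \sum_(q < L.+1) walk_coef f1 g (L - q) * walk_coef f2 g q.
Proof.
rewrite /walk_coef; set p := olen g; have p_gt0 : (0 < p)%N := olen_gt0 g.
case: ifP => dL; last first.
  apply/esym/big1 => q _; case: ifP => d1; case: ifP => d2; rewrite ?mul0r ?mulr0 //.
  have qL : (q <= L)%N by rewrite -ltnS.
  by have := dvdn_add d1 d2; rewrite subnK // dL.
set c := (L %/ p)%N; have EL : L = (c * p)%N by rewrite divnK.
rewrite smul_mono_pow.
have hb (a : 'I_c.+1) : ((c - a) * p < L.+1)%N by rewrite ltnS EL leq_mul2r leq_subr orbT.
pose h (a : 'I_c.+1) := (inord ((c - a) * p) : 'I_L.+1).
symmetry; rewrite (sum_inj_support (h := h)).
- apply: eq_bigr => a _; rewrite /h inordK //.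
  have al : (a <= c)%N by rewrite -ltnS.
  have -> : (L - (c - a) * p = a * p)%N by rewrite EL -mulnBl subKn.
  by rewrite !dvdn_mull ?dvdnn // !mulnK.
- move=> a1 a2 /(congr1 (@nat_of_ord _)); rewrite /h !inordK //.
  move/eqP; rewrite eqn_pmul2r // => /eqP E1.
  have a1c : (a1 <= c)%N by rewrite -ltnS.
  have a2c : (a2 <= c)%N by rewrite -ltnS.
  by apply: val_inj => /=; rewrite -(subKn a1c) E1 subKn.
- move=> q /negP q_out; case: ifP => d1; case: ifP => d2; rewrite ?mul0r ?mulr0 //.
  have qL : (q <= L)%N by rewrite -ltnS.
  set b := (q %/ p)%N; have Eq : q = (b * p)%N :> nat by rewrite divnK.
  have bc : (b <= c)%N by rewrite -(leq_pmul2r p_gt0) -Eq -EL.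
  have bc' : (c - b < c.+1)%N by rewrite ltnS leq_subr.
  case: q_out; apply/codomP; exists (Ordinal bc'); apply: val_inj.
  by rewrite /h /= inordK subKn // -Eq.
Qed.

Lemma psi_hom : kalg_hom psi.
Proof.
split=> [x y|x y||c x]; apply: walk_ext => g L.
- rewrite sval_psi supp_addE svalid_walk !sval_psi /walk_coef.
  by case: ifP => _ //; rewrite addr0.
- rewrite sval_psi supp_mulE svalid_walk.
  rewrite qmul_walk walk_coef_mul; apply: eq_bigr => q _.
  by rewrite !sval_psi walk_coef_iter.
- rewrite sval_psi supp_oneE svalid_walk qone_tpath /walk_coef.
  case: L => [|L] /=; first by rewrite dvdn0 div0n mono_pow0 /trunc /= /sone eqxx.
  case: ifP => // d; rewrite /trunc /= /sone; case: eqP => // E0.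
  have := congr1 (fun m : mono _ => m (cyc_index g)) E0; rewrite !ffunE eqxx => Q.
  by have := divnK d; rewrite Q.
- rewrite sval_psi supp_scaleE svalid_walk !sval_psi /walk_coef.
  by case: ifP => _ //; rewrite mulr0.
Qed.

Lemma psi_central x : central (psi x).
Proof.
move=> y; apply: walk_ext => g L; rewrite !supp_mulE svalid_walk !qmul_walk.
rewrite [RHS](reindex_inj rev_ord_inj); apply: eq_bigr => q _.
have qL : (q <= L)%N by rewrite -ltnS.
rewrite !sval_psi walk_coef_iter /= subSS subKn // /walk_coef.
case: ifP => d; last by rewrite mul0r mulr0.
by rewrite mulrC; move: d; rewrite -iter_invp_fix => /eqP ->.
Qed.

Section Center.
Hypothesis Htrans : [transitive <<[set sigma; alpha; phi]>>, on [set: 'I_n] | 'P].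
Variable z : SA.
Hypothesis z_central : central z.

Definition arrow h : SA := mkS svalid (fun p => if p == walk h 1 then 1 else 0).

Lemma sval_arrow h g L :
  sval (arrow h) (walk g L) = if (L == 1%N) && (g == h) then 1 else 0.
Proof.
rewrite sval_mkS svalid_walk; congr (if _ then _ else _).
rewrite /walk /tpath xpair_eqE; case: L => [|[|L]] //=; rewrite ?andbF //.
  by apply/idP/idP => [/andP[_ /eqP [->]] //|/eqP ->]; rewrite ?eqxx.
by rewrite eqseq_cons /= !andbF.
Qed.

(* Evaluate [z a_h = a_h z] on the walk of length [K + 1] starting at [h]. *)
Lemma central_step h K :
  sval z (walk ((sigma^-1)%g h) K) =
  if iter K (sigma^-1)%g h == h then sval z (walk h K) else 0.
Proof.
have := congr1 (fun w : SA => sval w (walk h K.+1)) (z_central (arrow h)).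
rewrite !supp_mulE svalid_walk !qmul_walk.
have -> : \sum_(q < K.+2) sval z (walk (iter q (sigma^-1)%g h) (K.+1 - q)) *
            sval (arrow h) (walk h q) = sval z (walk ((sigma^-1)%g h) K).
  rewrite !big_ord_recl big1 => [|q _]; last by rewrite sval_arrow /= mulr0.
  by rewrite !sval_arrow /= eqxx mulr0 mulr1 add0r addr0 /bump /= subSS subn0.
have -> : \sum_(q < K.+2) sval (arrow h) (walk (iter q (sigma^-1)%g h) (K.+1 - q)) *
            sval z (walk h q) =
          if iter K (sigma^-1)%g h == h then sval z (walk h K) else 0.
  rewrite !big_ord_recr big1 => [|q _]; last first.
    rewrite sval_arrow /= (_ : (K.+1 - q == 1)%N = false) ?mul0r //.
    by apply/eqP; have := ltn_ord q; lia.
  rewrite !sval_arrow subSnn subnn /= mul0r addr0 add0r.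
  by case: eqP => _; rewrite ?mul1r ?mul0r.
by [].
Qed.

Lemma central_coef g K :
  sval z (walk g K) = if (olen g %| K)%N then sval z (walk (sigma g) K) else 0.
Proof.
have iter_sigma L : iter L (sigma^-1)%g (sigma g) = sigma (iter L (sigma^-1)%g g).
  by elim: L => //= L ->; rewrite permK permKV.
have := central_step (sigma g) K; rewrite permK iter_sigma => ->.
by rewrite (inj_eq perm_inj) iter_invp_fix.
Qed.

Lemma central_orbit g g' K : g' \in porbit sigma g -> (olen g %| K)%N ->
  sval z (walk g' K) = sval z (walk g K).
Proof.
move=> /porbitP[i ->] dK; rewrite permX.
elim: i => //= i <-; rewrite [RHS]central_coef.
have -> : olen (iter i sigma g) = olen g by rewrite -permX porbit_perm.
by rewrite dK.
Qed.

Lemma central_vertex h h' : sval z (walk h 0) = sval z (walk h' 0).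
Proof.
apply: (gen_transitive_invariant (f := fun h => sval z (walk h 0)) Htrans).
move=> s g; rewrite !inE -orbA => /or3P[]/eqP->.
- by have := central_step (sigma g) 0; rewrite permK /= eqxx.
- by rewrite /walk /tpath /= edge_alpha.
- have := central_step g 0; rewrite /= eqxx => <-.
  by rewrite /walk /tpath /= -alpha_phi edge_alpha.
Qed.

Lemma central_in_image : exists x, psi x = z.
Proof.
pose x : series_alg k r := mkS (fun _ => true) (fun mu : mono r =>
  if [pick i | mu == mono_pow i (mu i)] is Some i
  then sval z (walk (cyc_rep i) (mu i * olen (cyc_rep i))) else 0).
exists x; apply: walk_ext => g L; rewrite sval_psi /walk_coef.
case: ifP => dL; last by rewrite central_coef dL.
set c := (L %/ olen g)%N; have EL : (c * olen g)%N = L by rewrite divnK.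
rewrite sval_mkS /=; case: pickP => [i /eqP Ei|]; last first.
  by move=> /(_ (cyc_index g)); rewrite ffunE !eqxx.
have [c0|c_gt0] := posnP c.
  by rewrite -EL c0 !ffunE if_same !mul0n; apply: central_vertex.
have Eig : cyc_index g = i.
  have := congr1 (fun m : mono r => m (cyc_index g)) Ei; rewrite !ffunE eqxx.
  by case: eqP => // _ c_0; move: c_gt0; rewrite c_0.
have rep_orbit : porbit sigma (cyc_rep i) = porbit sigma g.
  by rewrite -!cyc_indexK cyc_repK Eig.
rewrite ffunE Eig eqxx rep_orbit EL; apply: central_orbit => //.
by rewrite -rep_orbit porbit_id.
Qed.

End Center.

Lemma psi_eq0 x : psi x = kzero SA <-> forall i c, sval x (mono_pow i c) = 0.
Proof.
split=> [x0 i c|x0].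
  have := congr1 (fun w : SA => sval w (walk (cyc_rep i) (c * olen (cyc_rep i)))) x0.
  rewrite sval_psi supp_zeroE /walk_coef dvdn_mull ?dvdnn // mulnK ?olen_gt0 //.
  by rewrite cyc_repK.
apply: walk_ext => g L; rewrite sval_psi supp_zeroE /walk_coef.
by case: ifP.
Qed.

End Surface.

Theorem mainTheorem2 (k : fieldType) (m : nat)
    (sigma alpha phi : {perm 'I_(2 * m)})
    (Htrans : [transitive <<[set sigma; alpha; phi]>>, on [set: 'I_(2 * m)] | 'P])
    (Hcomp : forall h, sigma (alpha (phi h)) = h)
    (Hinv : forall h, alpha (alpha h) = h)
    (Hfpf : forall h, alpha h != h) :
  (exists psi : series_alg k (ncyc sigma) -> surface_completion k alpha phi,
      [/\ kalg_hom psi,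
          forall y, central y <-> exists x, psi x = y &
          forall x, psi x = kzero _ <-> in_zz_ideal x])
  /\ kalg_isomorphic (normalization k sigma)
       (prod_kalg (fun i : 'I_(ncyc sigma) => cyc_alg k (cyc_len i))).
Proof.
have /imsetP[h0 _ _] := Htrans.
split; last exact: prod_hered_order_isomorphic.
exists (@psi k _ sigma alpha phi); split.
- exact: psi_hom.
- move=> y; split=> [y_central|[x <-]]; last exact: psi_central.
  exact: central_in_image.
- by move=> x; rewrite (psi_eq0 Hcomp Hinv Hfpf) (in_zz_ideal_iff (cyc_index sigma h0)).
Qed.
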